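(* Under the standing assumptions below, for every $x\in\mathcal X$, $s\in\mathcal S$ and $\gamma\in\mathbb R^I_+$, the dual value function satisfies $$D(\gamma,x,s)=\inf_{\lambda\in\mathbb R^I_+}\ \sup_{a\in\tilde{\mathcal A}(x,s)}\Big[r(x,a,s)+\sum_{i=1}^I\big(\gamma^ig^i(x,a,s)+\lambda^i(g^i(x,a,s)-\bar g^i)\big)+\beta\,\mathbb E_s D(\gamma+\lambda,x',s')\Big],$$ where $x'=\zeta(x,a,s)$ and $\mathbb E_s$ is expectation over $s'\sim\pi(\cdot|s)$.
   Context: Setup. Let $\mathcal S$ be a finite set and $(s_t)_{t\ge0}$ a Markov chain on $\mathcal S$ with transition probabilities $\pi(s'|s)>0$ for all $s,s'\in\mathcal S$; for a shock history $s^t=(s_0,\dots,s_t)\in\mathcal S^{t+1}$ write $\pi^t(s^t|s_0)$ for its probability given $s_0$, and $\mathbb E_{s_t}$ (equivalently $\mathbb E_{s^t}$) for expectation over future shocks conditional on the history $s^t$. Let $\mathcal A\subset\mathbb R^n$ be a finite set, $\mathcal X\subseteq\mathbb R^m$ a countable set, $\zeta:\mathcal X\times\mathcal A\times\mathcal S\to\mathcal X$, $p:\mathcal X\times\mathcal A\times\mathcal S\to\mathbb R$, $r,g^1,\dots,g^I:\mathcal X\times\mathcal A\times\mathcal S\to\mathbb R$ bounded functions, $\bar g^1,\dots,\bar g^I\in\mathbb R$ constants and $\beta\in(0,1)$. A plan is a family $a=(a(s^t))_{t\ge0,\,s^t\in\mathcal S^{t+1}}$ with $a(s^t)\in\mathcal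 A$; given $x_0\in\mathcal X$ it induces states $x(s^0)=x_0$, $x(s^{t+1})=\zeta(x(s^t),a(s^t),s_t)$. Let $\tilde{\mathcal A}(x,s)=\{a\in\mathcal A:p(x,a,s)\ge0\}$ and let $\tilde{\mathcal A}^\infty(x_0)$ be the set of plans with $a(s^t)\in\tilde{\mathcal A}(x(s^t),s_t)$ for all $t,s^t$. A plan is feasible for $(x_0,s_0)$ if it lies in $\tilde{\mathcal A}^\infty(x_0)$ and satisfies the forward-looking constraints $\mathbb E_{s_t}\sum_{n=0}^\infty\beta^ng^i(x(s^{t+n}),a(s^{t+n}),s_{t+n})\ge\bar g^i$ for all $t$, $s^t$, $i$. Standing assumption: for every $x_0\in\mathcal X$, $s_0\in\mathcal S$ a feasible plan exists. Pre-action histories: $\mathcal H^t=\mathcal S^{t+1}\times\mathcal A^t$ with elements $h^t=(s_0,a_0,\dots,s_{t-1},a_{t-1},s_t)$; along $s^t$ a plan generates the history $h^t=(s_0,a(s^0),\dots,s_{t-1},a(s^{t-1}),s_t)$. Dual value function. $\Lambda$ is the set of families $(\lambda^i(h^t))_{t\ge0,h^t\in\mathcal H^t,1\le i\le I}$ with $\lambda^i(h^t)\ge0$ and $\sum_t\sum_{h^t}\sum_i\beta^t\lambda^i(h^t)\pi^t(s^t|s_0)<\infty$ ($s^t$ the shock history in $h^t$). For $\gamma\in\mathbb R^I_+$ the Lagrangian is $L(a,\lambda;\gamma,x_0,s_0)=\mathbb E_{s_0}\sum_{t\ge0}\beta^t\Big[r(x(s^t),a(s^t),s_t)+\sum_i\gamma^ig^i(x(s^t),a(s^t),s_t)+\sum_i\lambda^i(h^t)\Big(\sum_{n\ge0}\beta^ng^i(x(s^{t+n}),a(s^{t+n}),s_{t+n})-\bar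 g^i\Big)\Big]$, with $h^t$ the history generated by the plan, and $D(\gamma,x_0,s_0)=\inf_{\lambda\in\Lambda}\sup_{a\in\tilde{\mathcal A}^\infty(x_0)}L(a,\lambda;\gamma,x_0,s_0)$. *)

From HB Require Import structures.
From mathcomp Require Import all_boot all_order all_algebra.
From mathcomp Require Import all_classical all_reals all_analysis.
Set Implicit Arguments. Unset Strict Implicit. Unset Printing Implicit Defensive.
Import Order.TTheory GRing.Theory Num.Theory.
Import numFieldNormedType.Exports.
Local Open Scope ring_scope.
Local Open Scope classical_set_scope.

Fixpoint allseq (T : finType) (n : nat) : seq (seq T) :=
  if n is n'.+1 then [seq x :: l | x <- enum T, l <- allseq T n'] else [:: [::]].

Definition rsum {R : realType} (u : nat -> R) : R := limn (series u).

Section Model.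
Context {R : realType} {S A : finType} {X : countType} (I : nat).
(* pi s s' = pi(s'|s); shock histories s^t = [:: s_0; ...; s_t] : seq S;
   plans a : seq S -> A (a st = a(s^t)); multipliers
   lam : seq S -> seq A -> 'I_I -> R, lam st ac i = lam^i(h^t) for the
   pre-action history h^t with shocks st = s^t and actions ac = (a_0..a_{t-1}). *)
Context (pi : S -> S -> R) (zeta : X -> A -> S -> X)
        (r : X -> A -> S -> R) (g : 'I_I -> X -> A -> S -> R)
        (gbar : 'I_I -> R) (beta : R).

Fixpoint pprob (s : S) (c : seq S) : R :=
  if c is s' :: c' then pi s s' * pprob s' c' else 1.

Definition histprob (st : seq S) : R :=
  if st is s0 :: c then pprob s0 c else 0.

(* state x(s^t) induced by plan a and x0 *)
Fixpoint state_aux (a : seq S -> A) (x : X) (pre rest : seq S) : X :=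
  match rest with
  | s :: ((_ :: _) as rest') =>
      state_aux a (zeta x (a (rcons pre s)) s) (rcons pre s) rest'
  | _ => x
  end.
Definition state (a : seq S -> A) (x0 : X) (st : seq S) : X :=
  state_aux a x0 [::] st.

Definition flow (f : X -> A -> S -> R) (a : seq S -> A) (x0 : X) (st : seq S) : R :=
  if st is s0 :: c then f (state a x0 st) (a st) (last s0 c) else 0.

Definition contval (f : X -> A -> S -> R) (a : seq S -> A) (x0 : X) (st : seq S) : R :=
  if st is s0 :: c0 then
    rsum (fun n => beta ^+ n *
      \sum_(c <- allseq S n) pprob (last s0 c0) c * flow f a x0 (st ++ c))
  else 0.

(* actions (a(s^0), ..., a(s^{t-1})) generated along s^t *)
Definition acts (a : seq S -> A) (st : seq S) : seq A :=
  [seq a (take k.+1 st) | k <- iota 0 (size st).-1].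

Definition admissible (p : X -> A -> S -> R) (x0 : X) (a : seq S -> A) : Prop :=
  forall s0 c, 0 <= flow p a x0 (s0 :: c).

Definition feasible (p : X -> A -> S -> R) (x0 : X) (s0 : S) (a : seq S -> A) : Prop :=
  admissible p x0 a /\
  forall (c : seq S) (i : 'I_I), gbar i <= contval (g i) a x0 (s0 :: c).

Definition Lambda (lam : seq S -> seq A -> 'I_I -> R) : Prop :=
  (forall st ac i, 0 <= lam st ac i) /\
  (\sum_(t <oo) (beta ^+ t *
      \sum_(st <- allseq S t.+1) \sum_(ac <- allseq A t) \sum_(i < I)
         lam st ac i * histprob st)%:E < +oo)%E.

Definition lagrangian (a : seq S -> A) (lam : seq S -> seq A -> 'I_I -> R)
    (gamma : 'I_I -> R) (x0 : X) (s0 : S) : R :=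
  rsum (fun t => beta ^+ t * \sum_(c <- allseq S t)
    histprob (s0 :: c) *
     (flow r a x0 (s0 :: c)
      + \sum_(i < I) gamma i * flow (g i) a x0 (s0 :: c)
      + \sum_(i < I) lam (s0 :: c) (acts a (s0 :: c)) i *
          (contval (g i) a x0 (s0 :: c) - gbar i))).

Definition Dval (p : X -> A -> S -> R) (gamma : 'I_I -> R) (x0 : X) (s0 : S) : \bar R :=
  ereal_inf [set ereal_sup [set (lagrangian a lam gamma x0 s0)%:E
                             | a in admissible p x0]
            | lam in Lambda].

End Model.

(* The Lagrangian is a discounted sum over periods, so it splits into the period-0
   term and a pi-weighted sum of Lagrangians of the continuation problems from
   x' = zeta x a0 s.  In that split the period-0 multipliers lambda(h^0) only enter
   through the continuation value of g^i, which is g^i today plus beta times the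
   continuation values tomorrow; they are therefore absorbed into the weights
   gamma + lambda(h^0) of the continuation Lagrangians, whose multipliers are the
   restrictions of lambda to the subtrees (which stay in Lambda because pi > 0).
   Taking the supremum over plans and the infimum over multipliers commutes with this
   split because both can be chosen independently on each subtree: epsilon-optimal
   continuation plans are grafted below the root action, and epsilon-optimal
   continuation multipliers below the root multiplier.  A feasible plan bounds every
   Lagrangian from below and the zero multiplier bounds D from above, so all values
   are finite. *)

From mathcomp Require Import all_boot all_order all_algebra.
From mathcomp Require Import all_classical all_reals all_analysis.
From mathcomp Require Import ring.
Import Order.TTheory GRing.Theory Num.Theory.
Import numFieldNormedType.Exports.
Local Open Scope ring_scope.
Local Open Scope classical_set_scope.

Set Implicit Arguments. Unset Strict Implicit. Unset Printing Implicit Defensive.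

Lemma big_allseqS (R : realType) (T : finType) n (F : seq T -> R) :
  \sum_(c <- allseq T n.+1) F c = \sum_(x : T) \sum_(c <- allseq T n) F (x :: c).
Proof. by rewrite /= big_allpairs_dep big_enum. Qed.

Lemma mem_allseq (T : finType) n c : (c \in allseq T n) = (size c == n).
Proof.
elim: n c => [|n IH] [|x c] //=.
  by apply/allpairsP; case=> -[y l] /= [_ _].
apply/allpairsP/idP => [[[y l] /= [_]]|szc].
  by rewrite IH => /eqP <- [_ ->].
by exists (x, c); rewrite /= mem_enum IH.
Qed.

Lemma ler_sum_term (R : numDomainType) (T : eqType) (r : seq T) (F : T -> R) x :
  x \in r -> (forall y, 0 <= F y) -> F x <= \sum_(y <- r) F y.
Proof.
elim: r => [|y r IH] //; rewrite in_cons big_cons => /orP [/eqP -> | xr] F0.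
  by rewrite lerDl sumr_ge0.
by apply: le_trans (IH xr F0) _; rewrite lerDr.
Qed.

Lemma fin_num_between (R : realType) (e : \bar R) (lo hi : R) :
  (lo%:E <= e)%E -> (e <= hi%:E)%E -> e \is a fin_num.
Proof.
move=> lo_e e_hi; rewrite fin_numElt (lt_le_trans (ltNyr lo) lo_e).
exact: le_lt_trans e_hi (ltry hi).
Qed.

Section Series.
Context {R : realType}.
Implicit Types u v : nat -> R.

Lemma series_cst0 : series (fun _ => 0 : R) = fun _ => 0.
Proof. by apply/funext => n; rewrite /series /= big1. Qed.

Lemma is_cvg_series_dominated u v :
  (forall n, `|u n| <= v n) -> cvgn (series v) -> cvgn (series u).
Proof.
move=> uv cv; apply: normed_cvg.
by apply: (series_le_cvg _ _ uv) => // n; exact: le_trans (uv n).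
Qed.

Lemma ler_lim_series_dominated u v : (forall n, `|u n| <= v n) ->
  cvgn (series v) -> `|limn (series u)| <= limn (series v).
Proof.
move=> uv cv; have cn : cvgn [normed series u].
  by apply: (series_le_cvg _ _ uv) => // n; exact: le_trans (uv n).
exact: le_trans (lim_series_norm cn) (lim_series_le _ _ uv).
Qed.

Lemma cvg_series_head u : cvgn (series u) ->
  cvgn (series (fun k => u k.+1)) /\
  limn (series u) = u 0%N + limn (series (fun k => u k.+1)).
Proof.
move=> /cvg_ex [l ul]; have tlE : series (fun k => u k.+1) = fun n => series u n.+1 - u 0%N.
  by apply/funext => n; rewrite /series /= big_nat_recl // addrC addKr.
have uS : series u \o S @ \oo --> l by rewrite cvg_shiftS.
have tl_cvg : series (fun k => u k.+1) @ \oo --> l - u 0%N.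
  by rewrite tlE; apply: cvgB => //; exact: cvg_cst.
split; first by apply/cvg_ex; exists (l - u 0%N).
by rewrite (cvg_lim _ ul) // (cvg_lim _ tl_cvg) // addrC subrK.
Qed.

Lemma is_cvg_series_behead u : cvgn (series (fun k => u k.+1)) -> cvgn (series u).
Proof.
move=> /cvg_ex [l ul]; have uS : series u \o S @ \oo --> u 0%N + l.
  have -> : series u \o S = fun n => u 0%N + series (fun k => u k.+1) n.
    by apply/funext => n /=; rewrite /series /= big_nat_recl.
  by apply: cvgD => //; exact: cvg_cst.
by apply/cvg_ex; exists (u 0%N + l); rewrite -cvg_shiftS.
Qed.

Lemma cvg_seriesZ k u : cvgn (series u) ->
  cvgn (series (fun n => k * u n)) /\
  limn (series (fun n => k * u n)) = k * limn (series u).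
Proof.
move=> cu; have -> : (fun n => k * u n) = k *: u by apply/funext.
by split; [exact: is_cvg_seriesZ | rewrite lim_seriesZ].
Qed.

Lemma cvg_series_big (I : Type) (r : seq I) (F : I -> nat -> R) :
  (forall i, cvgn (series (F i))) ->
  cvgn (series (fun n => \sum_(i <- r) F i n)) /\
  limn (series (fun n => \sum_(i <- r) F i n)) = \sum_(i <- r) limn (series (F i)).
Proof.
move=> cF; elim: r => [|i r [IH1 IH2]].
  have -> : (fun n => \sum_(i <- [::]) F i n) = (fun _ => 0 : R).
    by apply/funext => n; rewrite big_nil.
  by rewrite series_cst0 big_nil; split; [exact: is_cvg_cst | rewrite lim_cst].
have -> : (fun n => \sum_(j <- i :: r) F j n) = F i + (fun n => \sum_(j <- r) F j n).
  by apply/funext => n; rewrite big_cons.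
split; first exact: is_cvg_seriesD.
by rewrite lim_seriesD // IH2 big_cons.
Qed.

Lemma cvg_series_geometric (b M : R) : 0 <= b < 1 ->
  cvgn (series (fun n => b ^+ n * M)) /\
  limn (series (fun n => b ^+ n * M)) = M / (1 - b).
Proof.
move=> /andP [b0 b1].
have -> : (fun n => b ^+ n * M) = geometric M b by apply/funext => n /=; rewrite mulrC.
have nb : `|b| < 1 by rewrite ger0_norm.
split; first exact: is_cvg_geometric_series.
by rewrite (cvg_lim _ (@cvg_geometric_series _ M _ nb)).
Qed.

Lemma is_cvg_seriesE_nneseries u : (forall n, 0 <= u n) ->
  cvgn (series u) <-> (\sum_(k <oo) (u k)%:E < +oo)%E.
Proof.
move=> u0; split; last exact: nnseries_is_cvg.
move=> cu; suff -> : (\sum_(k <oo) (u k)%:E)%E = (limn (series u))%:E by exact: ltry.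
by rewrite -EFin_lim //; congr (limn _); apply/funext => n /=; rewrite sumEFin.
Qed.

End Series.

Section PathProbability.
Context {R : realType} {S : finType} (pi : S -> S -> R).
Hypotheses (pi_pos : forall s s', 0 < pi s s') (pi_sum : forall s, \sum_(s' : S) pi s s' = 1).

Lemma pprob_ge0 s c : 0 <= pprob pi s c.
Proof. by elim: c s => [|x c IH] s //=; rewrite mulr_ge0 // ltW. Qed.

Lemma histprob_ge0 st : 0 <= histprob pi st.
Proof. by case: st => [|s c] //=; exact: pprob_ge0. Qed.

Lemma sum_pprob n s : \sum_(c <- allseq S n) pprob pi s c = 1.
Proof.
elim: n s => [|n IH] s; first by rewrite /= big_seq1.
rewrite big_allseqS -(pi_sum s); apply: eq_bigr => x _ /=.
by rewrite -mulr_sumr IH mulr1.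
Qed.

Lemma sum_pi_const s (c : R) : \sum_(s' : S) pi s s' * c = c.
Proof. by rewrite -mulr_suml pi_sum mul1r. Qed.

Lemma norm_expect_le n s (h : seq S -> R) M : (forall c, `|h c| <= M) ->
  `|\sum_(c <- allseq S n) pprob pi s c * h c| <= M.
Proof.
move=> hM; apply: le_trans (ler_norm_sum _ _ _) _.
apply: (@le_trans _ _ (\sum_(c <- allseq S n) pprob pi s c * M)); last first.
  by rewrite -mulr_suml sum_pprob mul1r.
by apply: ler_sum => c _; rewrite normrM ger0_norm ?pprob_ge0 // ler_wpM2l ?pprob_ge0.
Qed.

Lemma pi_le1 s s' : pi s s' <= 1.
Proof. by rewrite -(pi_sum s) (ler_sum_term (F := pi s)) ?mem_index_enum // => y; exact: ltW. Qed.

Lemma histprob_cons_le s st : st != [::] -> histprob pi (s :: st) <= histprob pi st.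
Proof. by case: st => [|s' c] //= _; rewrite ler_piMl ?pprob_ge0 ?pi_le1. Qed.

Definition pi_inv_mass s := \sum_(s' : S) (pi s s')^-1.

Lemma pi_inv_mass_gt0 s : 0 < pi_inv_mass s.
Proof.
rewrite /pi_inv_mass (bigD1 s) //= ltr_pwDl ?invr_gt0 //.
by apply: sumr_ge0 => ? _; rewrite invr_ge0 ltW.
Qed.

Lemma histprob_le_cons s st : st != [::] ->
  histprob pi st <= pi_inv_mass s * histprob pi (s :: st).
Proof.
case: st => [|s' c] //= _; rewrite mulrA ler_peMl ?pprob_ge0 //.
have pi_inv_le : (pi s s')^-1 <= pi_inv_mass s.
  rewrite (ler_sum_term (F := fun z => (pi s z)^-1)) ?mem_index_enum // => z.
  by rewrite invr_ge0 ltW.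
by rewrite -(mulVf (lt0r_neq0 (pi_pos s s'))) ler_wpM2r // ltW.
Qed.

End PathProbability.

Definition plan_tail {S A : Type} (s : S) (a : seq S -> A) := fun d => a (s :: d).

Section Plans.
Context {R : realType} {S A : finType} {X : countType}.
Context (pi : S -> S -> R) (zeta : X -> A -> S -> X) (beta : R).

Lemma state_aux_tail (a : seq S -> A) s rest : forall x pre,
  state_aux zeta a x (s :: pre) rest = state_aux zeta (plan_tail s a) x pre rest.
Proof.
elim: rest => [|y rest IH] x pre //=.
by case: rest IH => [|z rest] IH.
Qed.

Lemma state_cons2 a x s s' c :
  state zeta a x (s :: s' :: c) = state zeta (plan_tail s a) (zeta x (a [:: s]) s) (s' :: c).
Proof. by rewrite /state /= state_aux_tail. Qed.

Lemma flow_cons2 (f : X -> A -> S -> R) a x s s' c :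
  flow zeta f a x (s :: s' :: c) = flow zeta f (plan_tail s a) (zeta x (a [:: s]) s) (s' :: c).
Proof. by rewrite /flow state_cons2. Qed.

Lemma contval_cons2 (f : X -> A -> S -> R) a x s s' c :
  contval pi zeta beta f a x (s :: s' :: c) =
  contval pi zeta beta f (plan_tail s a) (zeta x (a [:: s]) s) (s' :: c).
Proof.
rewrite /contval; congr rsum; apply/funext => n; congr (_ * _).
by apply: eq_bigr => c2 _; rewrite !cat_cons flow_cons2.
Qed.

Lemma acts_cons2 (a : seq S -> A) s s' c :
  acts a (s :: s' :: c) = a [:: s] :: acts (plan_tail s a) (s' :: c).
Proof. by rewrite /acts /= -add1n iotaDl -map_comp. Qed.

Lemma size_acts (a : seq S -> A) st : size (acts a st) = (size st).-1.
Proof. by rewrite /acts size_map size_iota. Qed.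

Section SameAfterFirstShock.
Variables (a b : seq S -> A) (s : S).
Hypothesis ab_tail : plan_tail s a = plan_tail s b.

Lemma state_tail_eq x c : state zeta a x (s :: c) = state zeta b x (s :: c).
Proof.
case: c => [|s' c] //; rewrite !state_cons2 ab_tail.
by have -> : a [:: s] = b [:: s] by exact: (congr1 (fun h => h [::]) ab_tail).
Qed.

Lemma flow_tail_eq (f : X -> A -> S -> R) x c :
  flow zeta f a x (s :: c) = flow zeta f b x (s :: c).
Proof.
rewrite /flow state_tail_eq.
by have -> : a (s :: c) = b (s :: c) by exact: (congr1 (fun h => h c) ab_tail).
Qed.

Lemma acts_tail_eq c : acts a (s :: c) = acts b (s :: c).
Proof. by apply: eq_map => k /=; exact: (congr1 (fun h => h (take k c)) ab_tail). Qed.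

Lemma contval_tail_eq (f : X -> A -> S -> R) x c :
  contval pi zeta beta f a x (s :: c) = contval pi zeta beta f b x (s :: c).
Proof.
rewrite /contval; congr rsum; apply/funext => n; congr (_ * _).
by apply: eq_bigr => c2 _; rewrite !cat_cons flow_tail_eq.
Qed.

End SameAfterFirstShock.

Lemma admissible_tail (p : X -> A -> S -> R) a x s : admissible zeta p x a ->
  admissible zeta p (zeta x (a [:: s]) s) (plan_tail s a).
Proof. by move=> adm s' c; rewrite -flow_cons2; exact: adm. Qed.

Lemma admissible_head (p : X -> A -> S -> R) a x s :
  admissible zeta p x a -> 0 <= p x (a [:: s]) s.
Proof. by move=> adm; exact: adm s [::]. Qed.

End Plans.

Definition plan_graft {S A : eqType} (s : S) (a0 : A) (a' : S -> seq S -> A) (af : seq S -> A) :=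
  fun d : seq S => match d with
  | s0 :: d' => if s0 == s then (if d' is s' :: _ then a' s' d' else a0) else af d
  | [::] => a0
  end.

Section PlanGraft.
Context {R : realType} {S A : finType} {X : countType}.
Context (zeta : X -> A -> S -> X) (p : X -> A -> S -> R).
Variables (s : S) (a0 : A) (a' : S -> seq S -> A) (af : seq S -> A).

Lemma plan_graft_root : plan_graft s a0 a' af [:: s] = a0.
Proof. by rewrite /= eqxx. Qed.

Lemma plan_graft_tail s' :
  plan_tail s' (plan_tail s (plan_graft s a0 a' af)) = plan_tail s' (a' s').
Proof. by apply/funext => d; rewrite /plan_tail /= eqxx. Qed.

Lemma admissible_plan_graft x : admissible zeta p x af -> 0 <= p x a0 s ->
  (forall s', admissible zeta p (zeta x a0 s) (a' s')) ->
  admissible zeta p x (plan_graft s a0 a' af).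
Proof.
move=> af_adm pa0 a'_adm s0 c; have [->|s0s] := eqVneq s0 s.
  case: c => [|s' c]; first by rewrite /flow /= eqxx.
  by rewrite flow_cons2 plan_graft_root (flow_tail_eq _ (plan_graft_tail s')); exact: a'_adm.
have tail_af : plan_tail s0 (plan_graft s a0 a' af) = plan_tail s0 af.
  by apply/funext => d; rewrite /plan_tail /= (negbTE s0s).
by rewrite (flow_tail_eq _ tail_af); exact: af_adm.
Qed.

End PlanGraft.

Definition mult_tail {S A T : Type} (s : S) (a0 : A) (lam : seq S -> seq A -> T) :=
  fun st ac => lam (s :: st) (a0 :: ac).

Section Multipliers.
Context {R : realType} {S A : finType} (I : nat) (pi : S -> S -> R) (beta : R).
Hypotheses (pi_pos : forall s s', 0 < pi s s') (pi_sum : forall s, \sum_(s' : S) pi s s' = 1).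
Hypothesis beta_gt0 : 0 < beta.

Local Notation mult := (seq S -> seq A -> 'I_I -> R).
Implicit Types lam nu : mult.

Definition mult_nonneg lam := forall st ac i, 0 <= lam st ac i.

Definition mult_term lam t :=
  beta ^+ t * \sum_(st <- allseq S t.+1) \sum_(ac <- allseq A t) \sum_(i < I)
      lam st ac i * histprob pi st.

Lemma mult_term_ge0 lam : mult_nonneg lam -> forall t, 0 <= mult_term lam t.
Proof.
move=> lam0 t; rewrite mulr_ge0 ?exprn_ge0 ?(ltW beta_gt0) //.
by do 3 (apply: sumr_ge0 => ? _); rewrite mulr_ge0 ?histprob_ge0.
Qed.

Lemma LambdaE lam : Lambda pi beta lam <-> mult_nonneg lam /\ cvgn (series (mult_term lam)).
Proof.
by split=> -[lam0 cvg_lam]; split => //; apply/(is_cvg_seriesE_nneseries (mult_term_ge0 lam0)).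
Qed.

Lemma Lambda_nonneg lam : Lambda pi beta lam -> mult_nonneg lam.
Proof. by case/LambdaE. Qed.

Lemma Lambda_cvg lam : Lambda pi beta lam -> cvgn (series (mult_term lam)).
Proof. by case/LambdaE. Qed.

Lemma Lambda0 : Lambda pi beta (fun (_ : seq S) (_ : seq A) (_ : 'I_I) => 0).
Proof.
apply/LambdaE; split => //; have -> : mult_term (fun _ _ _ => 0) = fun _ => 0 :> R.
  apply/funext => t; rewrite /mult_term big1 ?mulr0 // => st _.
  by apply: big1 => ac _; apply: big1 => i _; rewrite mul0r.
by rewrite series_cst0; exact: is_cvg_cst.
Qed.

Lemma mult_term_le lam nu t : (forall st ac i, lam st ac i <= nu st ac i) ->
  mult_term lam t <= mult_term nu t.
Proof.
move=> lam_le; rewrite /mult_term ler_wpM2l ?exprn_ge0 ?(ltW beta_gt0) //.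
by do 3 (apply: ler_sum => ? _); rewrite ler_wpM2r ?histprob_ge0.
Qed.

Lemma mult_term_add lam nu t :
  mult_term (fun st ac i => lam st ac i + nu st ac i) t = mult_term lam t + mult_term nu t.
Proof.
rewrite /mult_term -mulrDr; congr (_ * _).
rewrite -big_split; apply: eq_bigr => st _; rewrite -big_split; apply: eq_bigr => ac _.
by rewrite -big_split; apply: eq_bigr => i _; rewrite mulrDl.
Qed.

Lemma mult_term_sum (T : Type) (r : seq T) (nu : T -> mult) t :
  mult_term (fun st ac i => \sum_(k <- r) nu k st ac i) t = \sum_(k <- r) mult_term (nu k) t.
Proof.
elim: r => [|k r IH].
  rewrite big_nil /mult_term big1 ?mulr0 // => st _.
  by apply: big1 => ac _; apply: big1 => i _; rewrite big_nil mul0r.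
rewrite big_cons -IH -mult_term_add; congr mult_term.
by apply/funext => st; apply/funext => ac; apply/funext => i; rewrite big_cons.
Qed.

Lemma expect_mult_along_le lam (a : seq S -> A) s t : mult_nonneg lam ->
  \sum_(c <- allseq S t) histprob pi (s :: c) * \sum_(i < I) lam (s :: c) (acts a (s :: c)) i
  <= \sum_(st <- allseq S t.+1) \sum_(ac <- allseq A t) \sum_(i < I) lam st ac i * histprob pi st.
Proof.
move=> lam0; set F := fun st => \sum_(ac <- allseq A t) \sum_(i < I) lam st ac i * histprob pi st.
have F0 st : 0 <= F st by do 2 (apply: sumr_ge0 => ? _); rewrite mulr_ge0 ?histprob_ge0.
rewrite big_allseqS; apply: le_trans (ler_sum_term (F := fun x => \sum_(c <- allseq S t) F (x :: c))
  (mem_index_enum s) _); last by move=> y; exact: sumr_ge0.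
rewrite big_seq [leRHS]big_seq; apply: ler_sum => c c_in.
rewrite mulr_sumr; under eq_bigr do rewrite mulrC.
apply: (ler_sum_term (F := fun ac => \sum_(i < I) lam (s :: c) ac i * histprob pi (s :: c))) => //.
  by rewrite mem_allseq size_acts /=; rewrite mem_allseq in c_in.
by move=> ac; apply: sumr_ge0 => i _; rewrite mulr_ge0 ?histprob_ge0.
Qed.

Definition mult_prefix (s : S) (y : A) nu : mult := fun st ac i =>
  match st, ac with
  | s0 :: st', y0 :: ac' => if (s0 == s) && (y0 == y) then nu st' ac' i else 0
  | _, _ => 0
  end.

Lemma mult_prefix_nonneg s y nu : mult_nonneg nu -> mult_nonneg (mult_prefix s y nu).
Proof.
by move=> nu0 [|s0 st'] [|y0 ac'] i //=; case: ifP => // _; exact: nu0.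
Qed.

Lemma mult_term_prefix s y nu t : mult_term (mult_prefix s y nu) t.+1 =
  beta * (beta ^+ t * \sum_(st <- allseq S t.+1) \sum_(ac <- allseq A t) \sum_(i < I)
     nu st ac i * histprob pi (s :: st)).
Proof.
rewrite /mult_term exprS -mulrA; congr (_ * (_ * _)).
rewrite big_allseqS (bigD1 s) //= [X in _ + X]big1 ?addr0 => [|z zs]; last first.
  apply: big1 => st _; apply: big1 => ac _; apply: big1 => i _.
  by case: ac => [|? ?]; rewrite /= ?(negbTE zs) mul0r.
apply: eq_bigr => st _; rewrite big_allseqS (bigD1 y) //= [X in _ + X]big1 ?addr0 => [|z zy].
  by apply: eq_bigr => ac _; rewrite !eqxx.
by apply: big1 => ac _; apply: big1 => i _; rewrite eqxx (negbTE zy) mul0r.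
Qed.

Lemma Lambda_mult_tail s y lam : Lambda pi beta lam -> Lambda pi beta (mult_tail s y lam).
Proof.
move=> /LambdaE [lam0 cvg_lam].
have tail0 : mult_nonneg (mult_tail s y lam) by move=> ? ? ?; exact: lam0.
apply/LambdaE; split => //.
have [cvg_shift _] := cvg_series_head cvg_lam.
have [cvg_scaled _] := cvg_seriesZ (pi_inv_mass pi s / beta) cvg_shift.
have k0 : 0 <= pi_inv_mass pi s / beta by rewrite divr_ge0 ?ltW ?pi_inv_mass_gt0.
apply: (series_le_cvg (mult_term_ge0 tail0) _ _ cvg_scaled) => [t|t].
  by rewrite mulr_ge0 ?mult_term_ge0.
have prefix_le : mult_term (mult_prefix s y (mult_tail s y lam)) t.+1 <= mult_term lam t.+1.
  apply: mult_term_le => -[|s0 st'] [|y0 ac'] i //=; rewrite ?lam0 //.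
  by case: ifP => [/andP [/eqP -> /eqP ->] //|_]; exact: lam0.
apply: le_trans (ler_wpM2l k0 prefix_le).
rewrite mult_term_prefix -!mulrA mulKf ?lt0r_neq0 // /mult_term mulrCA.
rewrite ler_wpM2l ?exprn_ge0 ?(ltW beta_gt0) // !mulr_sumr big_seq [leRHS]big_seq.
apply: ler_sum => st st_in; rewrite !mulr_sumr; apply: ler_sum => ac _.
rewrite !mulr_sumr; apply: ler_sum => i _; rewrite mulrCA ler_wpM2l ?lam0 //.
by apply: histprob_le_cons; rewrite mem_allseq in st_in; case: st st_in.
Qed.

(* [mu a0 s'] is placed on the subtree of histories starting with [s], [a0], [s'];
   it sees these histories with the root [s] and action [a0] removed. *)
Definition mult_graft (s : S) (l0 : 'I_I -> R) (mu : A -> S -> mult) : mult :=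
  fun st ac i => match st, ac with
  | [:: s0], [::] => if s0 == s then l0 i else 0
  | s0 :: ((s' :: _) as st'), a0 :: ac' => if s0 == s then mu a0 s' st' ac' i else 0
  | _, _ => 0
  end.

Section Graft.
Variables (s : S) (l0 : 'I_I -> R) (mu : A -> S -> mult).
Hypothesis l0_ge0 : forall i, 0 <= l0 i.
Hypothesis mu_Lambda : forall y s', Lambda pi beta (mu y s').

Let mu0 y s' : mult_nonneg (mu y s') := Lambda_nonneg (mu_Lambda y s').

Definition mult_root : mult := fun st ac i => if st == [:: s] then l0 i else 0.

Definition mult_branches : mult := fun st ac i =>
  \sum_(y : A) mult_prefix s y (fun st ac i => \sum_(s' : S) mu y s' st ac i) st ac i.

Lemma mult_root_nonneg : mult_nonneg mult_root.
Proof. by move=> st ac i; rewrite /mult_root; case: ifP. Qed.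

Lemma mult_branches_nonneg : mult_nonneg mult_branches.
Proof.
move=> st ac i; apply: sumr_ge0 => y _; apply: mult_prefix_nonneg => st' ac' i'.
by apply: sumr_ge0 => ? _; exact: mu0.
Qed.

Lemma mult_graft_nonneg : mult_nonneg (mult_graft s l0 mu).
Proof.
by move=> [|s0 [|s' c]] [|a0 ac'] i //=; case: ifP => // _; exact: mu0.
Qed.

Lemma mult_graft_le st ac i :
  mult_graft s l0 mu st ac i <= mult_root st ac i + mult_branches st ac i.
Proof.
have := mult_root_nonneg st ac i; have := mult_branches_nonneg st ac i.
case: st => [|s0 [|s' c]]; case: ac => [|a0 ac'] /= B0 P0; rewrite ?addr_ge0 //.
  by rewrite /mult_root eqseq_cons andbT lerDl.
case: ifP => [/eqP s0s|_]; last by rewrite addr_ge0.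
apply: ler_wpDl P0 _; rewrite /mult_branches (bigD1 a0) //= s0s !eqxx ler_wpDr //.
  by apply: sumr_ge0 => y _; case: ifP => // _; apply: sumr_ge0 => ? _; exact: mu0.
by rewrite (bigD1 s') //= ler_wpDr // sumr_ge0 // => ? _; exact: mu0.
Qed.

Lemma is_cvg_mult_root : cvgn (series (mult_term mult_root)).
Proof.
apply: is_cvg_series_behead; have -> : (fun t => mult_term mult_root t.+1) = (fun _ => 0).
  apply/funext => t; rewrite /mult_term big_seq big1 ?mulr0 // => st.
  rewrite mem_allseq => /eqP sz; apply: big1 => ac _; apply: big1 => i _.
  by rewrite /mult_root; case: eqP => [st_s|_]; [rewrite st_s in sz | rewrite mul0r].
by rewrite series_cst0; exact: is_cvg_cst.
Qed.

Lemma is_cvg_mult_branches : cvgn (series (mult_term mult_branches)).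
Proof.
have cvg_mu y s' := Lambda_cvg (mu_Lambda y s').
have cvg_y y : cvgn (series (fun t => beta * \sum_(s' <- index_enum S) mult_term (mu y s') t)).
  by have [cvg_sum _] := cvg_series_big (index_enum S) (cvg_mu y); case: (cvg_seriesZ beta cvg_sum).
have [cvg_bound _] := cvg_series_big (index_enum A) cvg_y.
apply: is_cvg_series_behead; apply: (series_le_cvg _ _ _ cvg_bound) => [t|t|t].
- exact/mult_term_ge0/mult_branches_nonneg.
- apply: sumr_ge0 => y _; rewrite mulr_ge0 ?(ltW beta_gt0) //.
  by apply: sumr_ge0 => s' _; exact/mult_term_ge0.
rewrite /mult_branches mult_term_sum; apply: ler_sum => y _.
rewrite mult_term_prefix -mult_term_sum ler_wpM2l ?(ltW beta_gt0) // /mult_term.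
rewrite ler_wpM2l ?exprn_ge0 ?(ltW beta_gt0) //.
rewrite big_seq [leRHS]big_seq; apply: ler_sum => st st_in.
apply: ler_sum => ac _; apply: ler_sum => i _; apply: ler_wpM2l.
  by apply: sumr_ge0 => ? _; exact: mu0.
by apply: histprob_cons_le => //; rewrite mem_allseq in st_in; case: st st_in.
Qed.

Lemma Lambda_mult_graft : Lambda pi beta (mult_graft s l0 mu).
Proof.
apply/LambdaE; split; first exact: mult_graft_nonneg.
have cvg_sum : cvgn (series (mult_term mult_root + mult_term mult_branches)).
  exact: is_cvg_seriesD is_cvg_mult_root is_cvg_mult_branches.
apply: (series_le_cvg _ _ _ cvg_sum) => [t|t|t].
- exact/mult_term_ge0/mult_graft_nonneg.
- by rewrite addr_ge0 // mult_term_ge0 //; [exact: mult_root_nonneg | exact: mult_branches_nonneg].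
by apply: le_trans (mult_term_le _ mult_graft_le) _; rewrite mult_term_add.
Qed.

End Graft.
End Multipliers.

Section ContinuationValue.
Context {R : realType} {S A : finType} {X : countType}.
Context (pi : S -> S -> R) (zeta : X -> A -> S -> X) (beta : R).
Hypotheses (pi_pos : forall s s', 0 < pi s s') (pi_sum : forall s, \sum_(s' : S) pi s s' = 1).
Hypotheses (beta_gt0 : 0 < beta) (beta_lt1 : beta < 1).
Variables (f : X -> A -> S -> R) (M : R).
Hypothesis f_bound : forall x a s, `|f x a s| <= M.

Lemma norm_flow_le a x st : 0 <= M -> `|flow zeta f a x st| <= M.
Proof. by case: st => [|s0 c0] M0; rewrite /flow ?normr0 ?f_bound. Qed.

Lemma cvg_series_geometric_beta (K : R) :
  cvgn (series (fun n => beta ^+ n * K)) /\ limn (series (fun n => beta ^+ n * K)) = K / (1 - beta).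
Proof. by apply: cvg_series_geometric; rewrite ltW. Qed.

Definition contval_term a x s0 c0 n :=
  beta ^+ n * \sum_(c <- allseq S n) pprob pi (last s0 c0) c * flow zeta f a x (s0 :: c0 ++ c).

Lemma norm_contval_term_le a x s0 c0 n : `|contval_term a x s0 c0 n| <= beta ^+ n * M.
Proof.
have bn0 : 0 <= beta ^+ n by rewrite exprn_ge0 ?ltW.
rewrite /contval_term normrM ger0_norm // ler_wpM2l //.
by apply: norm_expect_le => // c; rewrite /flow; case: (s0 :: c0 ++ c).
Qed.

Lemma is_cvg_contval a x s0 c0 : cvgn (series (contval_term a x s0 c0)).
Proof.
apply: (is_cvg_series_dominated (norm_contval_term_le a x s0 c0)).
by case: (cvg_series_geometric_beta M).
Qed.

Lemma norm_contval_le a x s0 c0 : `|contval pi zeta beta f a x (s0 :: c0)| <= M / (1 - beta).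
Proof.
have [cvg_geo <-] := cvg_series_geometric_beta M.
exact: ler_lim_series_dominated (norm_contval_term_le a x s0 c0) cvg_geo.
Qed.

Lemma contval_recursion a x s : contval pi zeta beta f a x [:: s] =
  f x (a [:: s]) s + beta * \sum_(s' : S) pi s s' *
    contval pi zeta beta f (plan_tail s a) (zeta x (a [:: s]) s) [:: s'].
Proof.
rewrite /contval /rsum; have [_ ->] := cvg_series_head (@is_cvg_contval a x s [::]).
congr (_ + _); first by rewrite /contval_term /= big_seq1 !mul1r.
set x' := zeta x (a [:: s]) s; set b := plan_tail s a.
have -> : (fun k => contval_term a x s [::] k.+1) =
    fun k => beta * \sum_(s' <- index_enum S) (pi s s' * contval_term b x' s' [::] k).
  apply/funext => k; rewrite /contval_term /= big_allseqS exprS -mulrA; congr (_ * _).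
  rewrite mulr_sumr; apply: eq_bigr => s' _; rewrite mulrCA; congr (_ * _).
  by rewrite mulr_sumr; apply: eq_bigr => c _; rewrite state_cons2 /=; ring.
have cvg_s' s' := cvg_seriesZ (pi s s') (@is_cvg_contval b x' s' [::]).
have [cvg_sum lim_sum] := cvg_series_big (index_enum S) (fun s' => (cvg_s' s').1).
have [_ ->] := cvg_seriesZ beta cvg_sum; rewrite lim_sum; congr (_ * _).
by apply: eq_bigr => s' _; rewrite (cvg_s' s').2.
Qed.

End ContinuationValue.

Section DualProblem.
Context {R : realType} {S A : finType} {X : countType} (I : nat).
Context (pi : S -> S -> R) (zeta : X -> A -> S -> X)
  (r : X -> A -> S -> R) (g : 'I_I -> X -> A -> S -> R) (gbar : 'I_I -> R) (beta : R).
Hypotheses (pi_pos : forall s s', 0 < pi s s') (pi_sum : forall s, \sum_(s' : S) pi s s' = 1).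
Hypotheses (beta_gt0 : 0 < beta) (beta_lt1 : beta < 1).
Variables (Mr : R) (Mg : 'I_I -> R).
Hypotheses (r_bound : forall x a s, `|r x a s| <= Mr) (Mr_ge0 : 0 <= Mr).
Hypotheses (g_bound : forall i x a s, `|g i x a s| <= Mg i) (Mg_ge0 : forall i, 0 <= Mg i).

Local Notation mult := (seq S -> seq A -> 'I_I -> R).
Local Notation L := (lagrangian pi zeta r g gbar beta).
Local Notation cv := (contval pi zeta beta).
Local Notation fl := (flow zeta).
Implicit Types (a : seq S -> A) (lam : mult) (gam : 'I_I -> R).

Definition lag_flow a lam gam x st :=
  fl r a x st + \sum_(i < I) gam i * fl (g i) a x st
  + \sum_(i < I) lam st (acts a st) i * (cv (g i) a x st - gbar i).

Definition lag_term a lam gam x s t :=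
  beta ^+ t * \sum_(c <- allseq S t) histprob pi (s :: c) * lag_flow a lam gam x (s :: c).

Lemma lagrangianE a lam gam x s : L a lam gam x s = rsum (lag_term a lam gam x s).
Proof. by []. Qed.

Definition lag_flow_const gam := Mr + \sum_(i < I) `|gam i| * Mg i.
Definition lag_mult_coef := \sum_(i < I) (Mg i / (1 - beta) + `|gbar i|).

Lemma lag_mult_coef_ge0 : 0 <= lag_mult_coef.
Proof. by apply: sumr_ge0 => i _; rewrite addr_ge0 // divr_ge0 // subr_ge0 ltW. Qed.

Lemma norm_contval_g_le i a x st : `|cv (g i) a x st| <= Mg i / (1 - beta).
Proof.
case: st => [|s0 c0]; last exact: norm_contval_le.
by rewrite normr0 divr_ge0 // subr_ge0 ltW.
Qed.

Lemma norm_lag_flow_le a lam gam x st : mult_nonneg lam ->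
  `|lag_flow a lam gam x st| <=
    lag_flow_const gam + lag_mult_coef * \sum_(i < I) lam st (acts a st) i.
Proof.
move=> lam0; rewrite /lag_flow /lag_flow_const.
apply: le_trans (ler_normD _ _) _; apply: lerD.
  apply: le_trans (ler_normD _ _) (lerD (norm_flow_le _ _ _ _ _ _) _) => //.
  apply: le_trans (ler_norm_sum _ _ _) _; apply: ler_sum => i _.
  by rewrite normrM ler_wpM2l // norm_flow_le.
apply: le_trans (ler_norm_sum _ _ _) _; rewrite mulr_sumr; apply: ler_sum => i _.
rewrite normrM (ger0_norm (lam0 _ _ _)) mulrC ler_wpM2r //.
apply: le_trans (ler_normB _ _) _; apply: le_trans (lerD (norm_contval_g_le _ _ _ _) (lexx _)) _.
rewrite (ler_sum_term (F := fun i => Mg i / (1 - beta) + `|gbar i|)) ?mem_index_enum //.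
by move=> j; rewrite addr_ge0 // divr_ge0 // subr_ge0 ltW.
Qed.

Definition lag_majorant gam lam t :=
  beta ^+ t * lag_flow_const gam + lag_mult_coef * mult_term pi beta lam t.

Lemma norm_lag_term_le a lam gam x s t : mult_nonneg lam ->
  `|lag_term a lam gam x s t| <= lag_majorant gam lam t.
Proof.
move=> lam0; have bt0 : 0 <= beta ^+ t by rewrite exprn_ge0 ?ltW.
rewrite /lag_term /lag_majorant /mult_term normrM (ger0_norm bt0) mulrCA -mulrDr ler_wpM2l //.
apply: le_trans (ler_norm_sum _ _ _) _.
apply: (@le_trans _ _ (\sum_(c <- allseq S t) histprob pi (s :: c) *
   (lag_flow_const gam + lag_mult_coef * \sum_(i < I) lam (s :: c) (acts a (s :: c)) i))).
  apply: ler_sum => c _; rewrite normrM (ger0_norm (histprob_ge0 pi_pos _)).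
  by rewrite ler_wpM2l ?histprob_ge0 ?norm_lag_flow_le.
under eq_bigr do rewrite mulrDr mulrCA.
rewrite big_split /= -mulr_suml -mulr_sumr (sum_pprob pi_sum) mul1r lerD2l.
by rewrite ler_wpM2l ?lag_mult_coef_ge0 ?expect_mult_along_le.
Qed.

Lemma cvg_lag_majorant gam lam : Lambda pi beta lam ->
  cvgn (series (lag_majorant gam lam)) /\
  limn (series (lag_majorant gam lam)) =
    lag_flow_const gam / (1 - beta) + lag_mult_coef * limn (series (mult_term pi beta lam)).
Proof.
move=> /(Lambda_cvg pi_pos beta_gt0) cvg_lam.
have [cvg_geo lim_geo] := cvg_series_geometric_beta beta_gt0 beta_lt1 (lag_flow_const gam).
have [cvg_mult lim_mult] := cvg_seriesZ lag_mult_coef cvg_lam.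
have -> : lag_majorant gam lam =
   (fun t => beta ^+ t * lag_flow_const gam) + (fun t => lag_mult_coef * mult_term pi beta lam t).
  by apply/funext.
by split; [exact: is_cvg_seriesD | rewrite lim_seriesD // lim_geo lim_mult].
Qed.

Lemma is_cvg_lagrangian a lam gam x s :
  Lambda pi beta lam -> cvgn (series (lag_term a lam gam x s)).
Proof.
move=> lamL; have [cvg_maj _] := cvg_lag_majorant gam lamL.
apply: is_cvg_series_dominated cvg_maj => t.
exact/norm_lag_term_le/(Lambda_nonneg pi_pos beta_gt0).
Qed.

Lemma norm_lagrangian_le a lam gam x s : Lambda pi beta lam ->
  `|L a lam gam x s| <=
    lag_flow_const gam / (1 - beta) + lag_mult_coef * limn (series (mult_term pi beta lam)).
Proof.
move=> lamL; have [cvg_maj <-] := cvg_lag_majorant gam lamL.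
apply: ler_lim_series_dominated cvg_maj => t.
exact/norm_lag_term_le/(Lambda_nonneg pi_pos beta_gt0).
Qed.

Lemma lag_flow_lower a lam gam x st : mult_nonneg lam ->
  (forall i, gbar i <= cv (g i) a x st) -> - lag_flow_const gam <= lag_flow a lam gam x st.
Proof.
move=> lam0 a_feas; rewrite /lag_flow /lag_flow_const opprD -[leLHS]addr0 lerD //; last first.
  by apply: sumr_ge0 => i _; rewrite mulr_ge0 ?subr_ge0.
apply: lerD.
  by have := norm_flow_le zeta r_bound a x st Mr_ge0; rewrite ler_norml => /andP [].
suff : `|\sum_(i < I) gam i * fl (g i) a x st| <= \sum_(i < I) `|gam i| * Mg i.
  by rewrite ler_norml => /andP [].
apply: le_trans (ler_norm_sum _ _ _) _; apply: ler_sum => i _.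
by rewrite normrM ler_wpM2l // norm_flow_le.
Qed.

Lemma lagrangian_lower a lam gam x s : Lambda pi beta lam ->
  (forall c i, gbar i <= cv (g i) a x (s :: c)) ->
  - (lag_flow_const gam / (1 - beta)) <= L a lam gam x s.
Proof.
move=> lamL a_feas.
have [cvg_geo lim_geo] := cvg_series_geometric_beta beta_gt0 beta_lt1 (- lag_flow_const gam).
rewrite lagrangianE -mulNr -lim_geo; apply: lim_series_le => // [|t].
  exact: is_cvg_lagrangian.
rewrite /lag_term; apply: ler_wpM2l; first by rewrite exprn_ge0 ?ltW.
rewrite -[leLHS]mul1r -(sum_pprob pi_sum t s) mulr_suml ler_sum // => c _.
apply: ler_wpM2l; first exact: pprob_ge0.
by apply: lag_flow_lower => [|i]; [exact: Lambda_nonneg pi_pos beta_gt0 _ lamL | exact: a_feas].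
Qed.

Lemma lag_flow_cons2 a lam gam x s s' c :
  lag_flow a lam gam x (s :: s' :: c) =
  lag_flow (plan_tail s a) (mult_tail s (a [:: s]) lam) gam (zeta x (a [:: s]) s) (s' :: c).
Proof.
rewrite /lag_flow flow_cons2 acts_cons2; congr (_ + _ + _).
  by apply: eq_bigr => i _; rewrite flow_cons2.
by apply: eq_bigr => i _; rewrite contval_cons2.
Qed.

Lemma lag_term_succ a lam gam x s t :
  lag_term a lam gam x s t.+1 = beta * \sum_(s' <- index_enum S) (pi s s' *
    lag_term (plan_tail s a) (mult_tail s (a [:: s]) lam) gam (zeta x (a [:: s]) s) s' t).
Proof.
rewrite /lag_term big_allseqS exprS -mulrA; congr (_ * _).
rewrite mulr_sumr; apply: eq_bigr => s' _; rewrite mulrCA; congr (_ * _).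
by rewrite mulr_sumr; apply: eq_bigr => c _; rewrite lag_flow_cons2 /= mulrA.
Qed.

Lemma lagrangian_unfold a lam gam x s : Lambda pi beta lam ->
  L a lam gam x s = lag_flow a lam gam x [:: s] + beta * \sum_(s' : S) pi s s' *
    L (plan_tail s a) (mult_tail s (a [:: s]) lam) gam (zeta x (a [:: s]) s) s'.
Proof.
move=> lamL; have tailL := Lambda_mult_tail pi_pos beta_gt0 s (a [:: s]) lamL.
rewrite lagrangianE /rsum; have [_ ->] := cvg_series_head (@is_cvg_lagrangian a lam gam x s lamL).
congr (_ + _); first by rewrite /lag_term /= big_seq1 expr0 !mul1r.
under [X in series X]funext do rewrite lag_term_succ.
have cvg_s' s' := cvg_seriesZ (pi s s')
  (@is_cvg_lagrangian (plan_tail s a) _ gam (zeta x (a [:: s]) s) s' tailL).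
have [cvg_sum lim_sum] := cvg_series_big (index_enum S) (fun s' => (cvg_s' s').1).
have [_ ->] := cvg_seriesZ beta cvg_sum; rewrite lim_sum; congr (_ * _).
by apply: eq_bigr => s' _; rewrite (cvg_s' s').2.
Qed.

Lemma lag_term_shift_gamma a lam gam l0 x s t :
  lag_term a lam (fun i => gam i + l0 i) x s t =
  lag_term a lam gam x s t + \sum_(i < I) l0 i * contval_term pi zeta beta (g i) a x s [::] t.
Proof.
have flow_split c : lag_flow a lam (fun i => gam i + l0 i) x (s :: c) =
    lag_flow a lam gam x (s :: c) + \sum_(i < I) l0 i * fl (g i) a x (s :: c).
  by rewrite /lag_flow; under eq_bigr do rewrite mulrDl; rewrite big_split /=; ring.
rewrite /lag_term /contval_term; under eq_bigr do rewrite flow_split mulrDr.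
rewrite big_split /= mulrDr; congr (_ + _).
rewrite mulr_sumr; under eq_bigr do rewrite !mulr_sumr.
rewrite exchange_big /=; apply: eq_bigr => i _.
by rewrite !mulr_sumr; apply: eq_bigr => c _ /=; ring.
Qed.

Lemma lagrangian_shift_gamma a lam gam l0 x s : Lambda pi beta lam ->
  L a lam (fun i => gam i + l0 i) x s = L a lam gam x s + \sum_(i < I) l0 i * cv (g i) a x [:: s].
Proof.
move=> lamL; have cvg_g i := cvg_seriesZ (l0 i) (@is_cvg_contval _ _ _ _ pi zeta beta pi_pos pi_sum
  beta_gt0 beta_lt1 _ _ (g_bound i) a x s [::]).
have [cvg_sum lim_sum] := cvg_series_big (index_enum 'I_I) (fun i => (cvg_g i).1).
rewrite !lagrangianE /rsum.
have -> : lag_term a lam (fun i => gam i + l0 i) x s = lag_term a lam gam x s +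
    (fun t => \sum_(i < I) l0 i * contval_term pi zeta beta (g i) a x s [::] t).
  by apply/funext => t; rewrite lag_term_shift_gamma.
rewrite lim_seriesD //; last exact: is_cvg_lagrangian lamL.
by rewrite lim_sum; congr (_ + _); apply: eq_bigr => i _; rewrite (cvg_g i).2.
Qed.

Lemma lag_flow_root a lam gam x s :
  lag_flow a lam gam x [:: s] =
  r x (a [:: s]) s + \sum_(i < I) (gam i * g i x (a [:: s]) s +
      lam [:: s] [::] i * (g i x (a [:: s]) s - gbar i)) +
  beta * \sum_(s' : S) pi s s' * \sum_(i < I)
    lam [:: s] [::] i * cv (g i) (plan_tail s a) (zeta x (a [:: s]) s) [:: s'].
Proof.
have cv_rec i := @contval_recursion _ _ _ _ pi zeta beta pi_pos pi_sum beta_gt0 beta_lt1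
  _ _ (g_bound i) a x s.
rewrite /lag_flow -addrA [in RHS]big_split -!addrA; congr (_ + (_ + _)).
set CV := fun i s' => cv (g i) (plan_tail s a) (zeta x (a [:: s]) s) [:: s'].
transitivity (\sum_(i < I) (lam [:: s] [::] i * (g i x (a [:: s]) s - gbar i) +
    beta * \sum_(s' : S) pi s s' * (lam [:: s] [::] i * CV i s'))).
  apply: eq_bigr => i _; rewrite cv_rec -/(CV i _).
  under [X in _ = _ + _ * X]eq_bigr do rewrite mulrCA.
  by rewrite -mulr_sumr; ring.
rewrite big_split /= -mulr_sumr exchange_big /=; congr (_ + _ * _).
by apply: eq_bigr => s' _; rewrite mulr_sumr.
Qed.

Lemma lagrangian_recursion a lam gam x s : Lambda pi beta lam ->
  L a lam gam x s =
  r x (a [:: s]) s + \sum_(i < I) (gam i * g i x (a [:: s]) s +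
      lam [:: s] [::] i * (g i x (a [:: s]) s - gbar i)) +
  beta * \sum_(s' : S) pi s s' * L (plan_tail s a) (mult_tail s (a [:: s]) lam)
      (fun i => gam i + lam [:: s] [::] i) (zeta x (a [:: s]) s) s'.
Proof.
move=> lamL; have tailL := Lambda_mult_tail pi_pos beta_gt0 s (a [:: s]) lamL.
rewrite lagrangian_unfold // lag_flow_root.
under [X in _ = _ + _ * X]eq_bigr do rewrite lagrangian_shift_gamma // mulrDr.
by rewrite [X in _ = _ + _ * X]big_split /= mulrDr; ring.
Qed.

Lemma lagrangian_mult_eq a lam lam' gam x s :
  (forall c ac i, lam (s :: c) ac i = lam' (s :: c) ac i) -> L a lam gam x s = L a lam' gam x s.
Proof.
move=> lam_eq; rewrite !lagrangianE; congr rsum; apply/funext => t; rewrite /lag_term.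
congr (_ * _); apply: eq_bigr => c _; congr (_ * (_ + _)).
by apply: eq_bigr => i _; rewrite lam_eq.
Qed.

Lemma lagrangian_tail_eq a b lam gam x s :
  plan_tail s a = plan_tail s b -> L a lam gam x s = L b lam gam x s.
Proof.
move=> ab_tail; rewrite !lagrangianE; congr rsum; apply/funext => t; rewrite /lag_term.
congr (_ * _); apply: eq_bigr => c _; rewrite /lag_flow.
rewrite (flow_tail_eq _ ab_tail) (acts_tail_eq ab_tail); congr (_ * (_ + _ + _)).
  by apply: eq_bigr => i _; rewrite (flow_tail_eq _ ab_tail).
by apply: eq_bigr => i _; rewrite (contval_tail_eq _ _ _ ab_tail).
Qed.

Variable p : X -> A -> S -> R.
Hypothesis feas : forall x0 s0, exists a, feasible pi zeta g gbar beta p x0 s0 a.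

Local Notation D := (Dval pi zeta r g gbar beta p).

Definition dual_sup lam gam x s := ereal_sup [set (L a lam gam x s)%:E | a in admissible zeta p x].

Lemma DvalE gam x s : D gam x s = ereal_inf [set dual_sup lam gam x s | lam in Lambda pi beta].
Proof. by []. Qed.

Lemma dual_sup_ge lam gam x s : Lambda pi beta lam ->
  ((- (lag_flow_const gam / (1 - beta)))%:E <= dual_sup lam gam x s)%E.
Proof.
move=> lamL; have [af [af_adm af_feas]] := feas x s.
apply: le_trans (ereal_sup_ubound _); last by exists af.
by rewrite lee_fin; apply: lagrangian_lower => // c i; exact: af_feas.
Qed.

Lemma dual_sup_fin lam gam x s : Lambda pi beta lam -> dual_sup lam gam x s \is a fin_num.
Proof.
move=> lamL; apply: fin_num_between (dual_sup_ge gam x s lamL) _.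
apply: ge_ereal_sup => _ [a _ <-]; rewrite lee_fin.
exact: le_trans (ler_norm _) (norm_lagrangian_le _ _ _ _ lamL).
Qed.

Lemma Dval_fin gam x s : D gam x s \is a fin_num.
Proof.
have lam0L := Lambda0 I pi_pos beta_gt0.
apply: (@fin_num_between _ _ (- (lag_flow_const gam / (1 - beta)))
  (fine (dual_sup (fun _ _ _ => 0) gam x s))).
  by rewrite DvalE; apply: le_ereal_inf_tmp => _ [lam lamL <-]; exact: dual_sup_ge.
by rewrite fineK ?dual_sup_fin //; apply: ereal_inf_lbound; exists (fun _ _ _ => 0).
Qed.

Definition Dfin gam x s := fine (D gam x s).

Lemma DvalEfin gam x s : D gam x s = (Dfin gam x s)%:E.
Proof. by rewrite fineK ?Dval_fin. Qed.

Lemma Dfin_le_dual_sup lam gam x s :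
  Lambda pi beta lam -> Dfin gam x s <= fine (dual_sup lam gam x s).
Proof.
move=> lamL; rewrite -lee_fin -DvalEfin fineK ?dual_sup_fin //.
by apply: ereal_inf_lbound; exists lam.
Qed.

Lemma dual_sup_approx lam gam x s e : Lambda pi beta lam -> 0 < e ->
  exists2 a, admissible zeta p x a & fine (dual_sup lam gam x s) - e < L a lam gam x s.
Proof.
move=> lamL e0; have sup_fin := dual_sup_fin gam x s lamL.
have [_ [a a_adm <-]] := ub_ereal_sup_adherent e0 sup_fin.
rewrite -/(dual_sup lam gam x s) -(fineK sup_fin) -EFinB lte_fin => near.
by exists a.
Qed.

Lemma Dval_approx gam x s e : 0 < e ->
  exists2 lam, Lambda pi beta lam & (dual_sup lam gam x s < (Dfin gam x s + e)%:E)%E.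
Proof.
move=> e0; have [_ [lam lamL <-]] := lb_ereal_inf_adherent e0 (Dval_fin gam x s).
by rewrite -DvalE DvalEfin => near; exists lam.
Qed.

Definition bellman_rhs gam (l0 : 'I_I -> R) x (s : S) (a0 : A) :=
  r x a0 s + \sum_(i < I) (gam i * g i x a0 s + l0 i * (g i x a0 s - gbar i))
  + beta * \sum_(s' : S) pi s s' * Dfin (fun i => gam i + l0 i) (zeta x a0 s) s'.

Lemma bellman_rhs_le_dual_sup gam x s lam (a0 : A) : Lambda pi beta lam -> 0 <= p x a0 s ->
  ((bellman_rhs gam (fun i => lam [:: s] [::] i) x s a0)%:E <= dual_sup lam gam x s)%E.
Proof.
move=> lamL pa0; apply/lee_addgt0Pr => e e0.
set l0 := fun i => lam [:: s] [::] i; set gam' := fun i => gam i + l0 i; set x' := zeta x a0 s.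
have tailL := Lambda_mult_tail pi_pos beta_gt0 s a0 lamL.
have near_opt s' : exists a, admissible zeta p x' a /\
    Dfin gam' x' s' - e < L a (mult_tail s a0 lam) gam' x' s'.
  have [a a_adm a_near] := dual_sup_approx gam' x' s' tailL e0.
  by exists a; split => //; apply: le_lt_trans a_near; rewrite lerD2r Dfin_le_dual_sup.
have [a' a'_opt] := choice near_opt; have [af [af_adm _]] := feas x s.
set ga := plan_graft s a0 a' af.
have ga_adm : admissible zeta p x ga.
  by apply: admissible_plan_graft => // s'; have [] := a'_opt s'.
have ga_le : bellman_rhs gam l0 x s a0 <= L ga lam gam x s + beta * e.
  rewrite lagrangian_recursion // /ga plan_graft_root -/ga -/x' -/l0 /bellman_rhs -!addrA !lerD2l.
  rewrite -mulrDr ler_wpM2l ?(ltW beta_gt0) // -[X in _ <= _ + X](sum_pi_const pi_sum s).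
  rewrite -big_split /= ler_sum // => s' _; rewrite -mulrDr ler_wpM2l ?(ltW (pi_pos _ _)) //.
  rewrite (lagrangian_tail_eq _ _ _ (plan_graft_tail s a0 a' af s')) -lerBlDr.
  by have [_ /ltW] := a'_opt s'.
apply: (@le_trans _ _ ((L ga lam gam x s)%:E + (beta * e)%:E)%E).
  by rewrite -EFinD lee_fin.
apply: leeD; first by apply: ereal_sup_ubound; exists ga.
by rewrite lee_fin ler_piMl ?ltW.
Qed.

Lemma Dval_le_sup_bellman_rhs gam x s (l0 : 'I_I -> R) : (forall i, 0 <= l0 i) ->
  (D gam x s <=
   ereal_sup [set (bellman_rhs gam l0 x s a0)%:E | a0 in [set a0 | (0 <= p x a0 s)%R]])%E.
Proof.
move=> l0_ge0; apply/lee_addgt0Pr => e e0; set gam' := fun i => gam i + l0 i.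
have near_inf (ys : A * S) : exists mu, Lambda pi beta mu /\
    (dual_sup mu gam' (zeta x ys.1 s) ys.2 < (Dfin gam' (zeta x ys.1 s) ys.2 + e)%:E)%E.
  by have [mu muL near] := Dval_approx gam' (zeta x ys.1 s) ys.2 e0; exists mu.
have [M M_opt] := choice near_inf; pose mu y s' := M (y, s').
have lamL : Lambda pi beta (mult_graft s l0 mu).
  by apply: Lambda_mult_graft => // y s'; have [] := M_opt (y, s').
apply: le_trans (_ : _ <= dual_sup (mult_graft s l0 mu) gam x s)%E _.
  by rewrite DvalE; apply: ereal_inf_lbound; exists (mult_graft s l0 mu).
apply: ge_ereal_sup => _ [a a_adm <-]; set a0 := a [:: s]; set x' := zeta x a0 s.
have tail_le s' : L (plan_tail s a) (mu a0 s') gam' x' s' <= Dfin gam' x' s' + e.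
  rewrite -lee_fin; apply: ltW; apply: le_lt_trans (M_opt (a0, s')).2.
  by apply: ereal_sup_ubound; exists (plan_tail s a) => //; exact: admissible_tail.
have a_le : L a (mult_graft s l0 mu) gam x s <= bellman_rhs gam l0 x s a0 + beta * e.
  have root i : mult_graft s l0 mu [:: s] [::] i = l0 i by rewrite /= eqxx.
  rewrite lagrangian_recursion // /bellman_rhs -/a0 -/x'; under eq_bigr do rewrite root.
  have -> : (fun i => gam i + mult_graft s l0 mu [:: s] [::] i) = gam'.
    by apply/funext => i; rewrite root.
  rewrite -!addrA !lerD2l -mulrDr ler_wpM2l ?(ltW beta_gt0) //.
  rewrite -[X in _ <= _ + X](sum_pi_const pi_sum s) -big_split /=.
  apply: ler_sum => s' _; rewrite -mulrDr ler_wpM2l ?(ltW (pi_pos _ _)) //.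
  rewrite (lagrangian_mult_eq _ _ _ (_ : forall c ac i, _ = mu a0 s' (s' :: c) ac i)) //.
  by move=> c ac i; rewrite /mult_tail /= eqxx.
apply: (@le_trans _ _ ((bellman_rhs gam l0 x s a0)%:E + (beta * e)%:E)%E).
  by rewrite -EFinD lee_fin.
apply: leeD; first by apply: ereal_sup_ubound; exists a0 => //; exact: admissible_head a_adm.
by rewrite lee_fin ler_piMl ?ltW.
Qed.

Lemma Dval_bellman gam x s : D gam x s =
  ereal_inf [set ereal_sup [set (bellman_rhs gam lam x s a)%:E | a in [set a | (0 <= p x a s)%R]]
            | lam in [set lam : 'I_I -> R | forall i, (0 <= lam i)%R]].
Proof.
apply/eqP; rewrite eq_le; apply/andP; split.
  by apply: le_ereal_inf_tmp => _ [l0 l0_ge0 <-]; exact: Dval_le_sup_bellman_rhs.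
rewrite DvalE; apply: le_ereal_inf_tmp => _ [lam lamL <-].
apply: le_trans (ereal_inf_lbound _) (ge_ereal_sup _).
  by exists (fun i => lam [:: s] [::] i) => // i; exact: (Lambda_nonneg pi_pos beta_gt0 lamL).
by move=> _ [a0 pa0 <-]; exact: bellman_rhs_le_dual_sup.
Qed.

Lemma bellman_rhsE gam (l0 : 'I_I -> R) x (s : S) (a0 : A) :
  ((r x a0 s + \sum_(i < I) (gam i * g i x a0 s + l0 i * (g i x a0 s - gbar i)))%:E
   + beta%:E * \sum_(s' : S) (pi s s')%:E * D (fun i => (gam i + l0 i)%R) (zeta x a0 s) s')%E
  = (bellman_rhs gam l0 x s a0)%:E.
Proof.
rewrite /bellman_rhs [in RHS]EFinD [in RHS]EFinM -sumEFin; congr (_ + _ * _)%E.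
by apply: eq_bigr => s' _; rewrite DvalEfin EFinM.
Qed.

End DualProblem.

Theorem theorem3p1 (R : realType) (S A : finType) (X : countType) (I : nat)
  (pi : S -> S -> R) (zeta : X -> A -> S -> X)
  (p r : X -> A -> S -> R) (g : 'I_I -> X -> A -> S -> R)
  (gbar : 'I_I -> R) (beta : R)
  (pi_pos : forall s s', 0 < pi s s')
  (pi_sum : forall s, \sum_(s' : S) pi s s' = 1)
  (r_bdd : exists M : R, forall x a s, `|r x a s| <= M)
  (g_bdd : forall i, exists M : R, forall x a s, `|g i x a s| <= M)
  (beta01 : 0 < beta < 1)
  (feas : forall (x0 : X) (s0 : S),
      exists a : seq S -> A, feasible pi zeta g gbar beta p x0 s0 a) :
  forall (x : X) (s : S) (gamma : 'I_I -> R), (forall i, 0 <= gamma i) ->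
  Dval pi zeta r g gbar beta p gamma x s =
  ereal_inf [set ereal_sup
     [set ((r x a s + \sum_(i < I) (gamma i * g i x a s
                                    + lam i * (g i x a s - gbar i)))%:E
           + beta%:E * \sum_(s' : S) (pi s s')%:E *
               Dval pi zeta r g gbar beta p (fun i => (gamma i + lam i)%R)
                    (zeta x a s) s')%E
     | a in [set a : A | 0 <= p x a s]]
   | lam in [set lam : 'I_I -> R | forall i, 0 <= lam i]].
Proof.
move=> x s gamma _; have /andP [beta_gt0 beta_lt1] := beta01.
have [Mr r_bound] := r_bdd; have [Mg g_bound] := choice g_bdd.
have r_bound' x' a s' : `|r x' a s'| <= `|Mr| := le_trans (r_bound x' a s') (ler_norm Mr).
have g_bound' i x' a s' : `|g i x' a s'| <= `|Mg i| := le_trans (g_bound i x' a s') (ler_norm _).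
have Mr_ge0 := normr_ge0 Mr; have Mg_ge0 i := normr_ge0 (Mg i).
rewrite (Dval_bellman pi_pos pi_sum beta_gt0 beta_lt1 r_bound' Mr_ge0 g_bound' Mg_ge0 feas).
congr ereal_inf; apply: eq_imagel => lam _; congr ereal_sup; apply: eq_imagel => a _.
by rewrite (bellman_rhsE pi_pos pi_sum beta_gt0 beta_lt1 r_bound' Mr_ge0 g_bound' Mg_ge0 feas).
Qed.
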